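(* Let $V$ be a Whittaker module of type $\eta$ over $R$ with cyclic Whittaker vector $w$. Write $Z_V=(p(\Omega))$ where $p=\prod_{i=1}^m p_i^{n_i}$ with $p_1,\dots,p_m$ pairwise non-associate irreducible polynomials and $n_i\ge1$. For $i=1,\dots,m$ set $V_i=R\prod_{j\neq i}p_j(\Omega)^{n_j}w$. Then each $V_i$ is an indecomposable submodule of $V$, and \[ V=V_1\oplus\cdots\oplus V_m . \]
   Context: Let $f\in\mathbb{C}[H]$ be a polynomial. $R=R(f)$ is the associative $\mathbb{C}$-algebra generated by $E,F,H$ with relations $EF-FE=f(H)$, $HE-EH=E$, $HF-FH=-F$. Let $u\in\mathbb{C}[H]$ satisfy $f(H)=\tfrac12(u(H+1)-u(H))$ and $\Omega=2FE+u(H+1)$; the center $Z(R)$ is the polynomial ring $\mathbb{C}[\Omega]$. Let $R(E)=\mathbb{C}[E]$ and fix an algebra homomorphism $\eta:R(E)\to\mathbb{C}$ with $\eta(E)\neq0$. A vector $v$ of an $R$-module $V$ is a Whittaker vector of type $\eta$ if $Ev=\eta(E)v$; $V$ is a Whittaker module of type $\eta$ with cyclic Whittaker vector $w$ if $w$ is a Whittaker vector and $V=Rw$. $Z_V=\mathrm{Ann}_R(V)\cap Z(R)$. *)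

From HB Require Import structures.
From mathcomp Require Import all_boot all_order all_algebra all_field.
Set Implicit Arguments. Unset Strict Implicit. Unset Printing Implicit Defensive.
Import GRing.Theory.
Local Open Scope ring_scope.

(* Modules over R(f) = C<E,F,H>/(relations) are modelled, as usual for an
   algebra given by generators and relations, by C-vector spaces V (with C
   the algebraic complex numbers algC) with three linear operators E,F,H
   satisfying the defining relations. *)

Section RfModules.
Variable V : lmodType algC.

Definition pact (T : V -> V) (q : {poly algC}) (v : V) : V :=
  \sum_(i < size q) q`_i *: iter i T v.

Definition Rf_relations (f : {poly algC}) (E F H : V -> V) : Prop :=
  forall v : V,
    [/\ E (F v) - F (E v) = pact H f v,
        H (E v) - E (H v) = E v
      & H (F v) - F (H v) = - F v].

Definition Omega (u : {poly algC}) (E F H : V -> V) (v : V) : V :=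
  2%:R *: F (E v) + pact (fun x => H x + x) u v.

Inductive gen (E F H : V -> V) (x : V) : V -> Prop :=
  | gen_base : gen E F H x x
  | gen_add a b : gen E F H x a -> gen E F H x b -> gen E F H x (a + b)
  | gen_scale (c : algC) a : gen E F H x a -> gen E F H x (c *: a)
  | gen_E a : gen E F H x a -> gen E F H x (E a)
  | gen_F a : gen E F H x a -> gen E F H x (F a)
  | gen_H a : gen E F H x a -> gen E F H x (H a).

Definition submodule (E F H : V -> V) (S : V -> Prop) : Prop :=
  [/\ S 0, (forall a b, S a -> S b -> S (a + b)),
      (forall (c : algC) a, S a -> S (c *: a))
    & [/\ (forall a, S a -> S (E a)), (forall a, S a -> S (F a))
         & (forall a, S a -> S (H a))]].

Definition zero_set (S : V -> Prop) : Prop := forall a, S a -> a = 0.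

Definition indecomposable (E F H : V -> V) (S : V -> Prop) : Prop :=
  [/\ submodule E F H S, ~ zero_set S &
      forall A B : V -> Prop, submodule E F H A -> submodule E F H B ->
        (forall a, A a -> S a) -> (forall b, B b -> S b) ->
        (forall s, S s -> exists a b, [/\ A a, B b & s = a + b]) ->
        (forall x, A x -> B x -> x = 0) ->
        zero_set A \/ zero_set B].

Definition direct_sum_decomp (m : nat) (Vs : 'I_m -> V -> Prop) : Prop :=
  (forall v : V, exists vs : 'I_m -> V,
      (forall i, Vs i (vs i)) /\ v = \sum_(i < m) vs i) /\
  (forall vs : 'I_m -> V, (forall i, Vs i (vs i)) ->
      \sum_(i < m) vs i = 0 -> forall i, vs i = 0).

End RfModules.

From HB Require Import structures.
From mathcomp Require Import all_boot all_order all_algebra all_field.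
Set Implicit Arguments. Unset Strict Implicit. Unset Printing Implicit Defensive.
Import GRing.Theory Num.Theory.
Local Open Scope ring_scope.

(* The Casimir element Omega is central, so polynomials in Omega act on V by
   module endomorphisms.  With r_i = p_i^n_i and q_i = prod_{j <> i} r_j,
   Bezout gives e_i in (q_i) with e_i = 1 mod r_i and sum_i e_i = 1 mod p;
   as p(Omega) = 0 on V, the e_i(Omega) are orthogonal projections of V onto
   V_i = R q_i(Omega) w, whence the direct sum.
   For indecomposability, the Whittaker vectors of a cyclic module R x with x
   Whittaker are exactly the c(Omega) x: every element of R x can be written
   sum_j N_j(H) c_j(Omega) x with N_j = rising j = X (X + 1) ... (X + j - 1),
   and E - eta lowers j, since E N_(j+1)(H) z = eta N_(j+1)(H) z
   - (j + 1) eta N_j(H) z for z Whittaker.  If V_i = A + B is a direct sum,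
   the A-component of x_i = q_i(Omega) w is thus c(Omega) x_i, so
   (c (1 - c))(Omega) x_i lies in both A and B, hence vanishes.  The
   annihilator of x_i in C[Omega] being (p_i^n_i), this prime power divides
   c or 1 - c, so x_i lies in B or in A, and the other summand is 0. *)

Section Coprime.
Variable K : fieldType.
Implicit Types p q c g : {poly K}.

Lemma size_irredp_neq1 p : irreducible_poly p -> size p != 1%N.
Proof. by case=> size_p _; rewrite neq_ltn size_p orbT. Qed.

Lemma irredp_coprimep_or_dvdp p q :
  irreducible_poly p -> coprimep p q \/ p %| q.
Proof.
move=> irr_p; have [|ncop] := boolP (coprimep p q); first by left.
right; have ngcd1 : size (gcdp p q) != 1%N by rewrite -coprimep_def.
by rewrite -(eqp_dvdl _ (irr_p _ ngcd1 (dvdp_gcdl p q))) dvdp_gcdr.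
Qed.

Lemma irredp_coprimep p q :
  irreducible_poly p -> irreducible_poly q -> ~~ (p %= q) -> coprimep p q.
Proof.
move=> irr_p irr_q; case: (irredp_coprimep_or_dvdp q irr_p) => // p_dvd_q.
by rewrite (irr_q _ (size_irredp_neq1 irr_p) p_dvd_q).
Qed.

Lemma irredp_exp_dvdp_idem p n c : irreducible_poly p ->
  p ^+ n %| c * (1 - c) -> p ^+ n %| c \/ p ^+ n %| 1 - c.
Proof.
move=> irr_p dvd_c1c; case: (irredp_coprimep_or_dvdp c irr_p) => [cop_c|p_dvd_c].
  by right; rewrite -(Gauss_dvdpr _ (coprimep_expl n cop_c)).
case: (irredp_coprimep_or_dvdp (1 - c) irr_p) => [cop_1c|p_dvd_1c].
  by left; rewrite -(Gauss_dvdpl _ (coprimep_expl n cop_1c)).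
have := dvdp_add p_dvd_c p_dvd_1c; rewrite addrC subrK dvdp1.
by rewrite (negbTE (size_irredp_neq1 irr_p)).
Qed.

Lemma coprimep_prodr (I : Type) (s : seq I) (P : pred I) p (r : I -> {poly K}) :
  (forall i, P i -> coprimep p (r i)) -> coprimep p (\prod_(i <- s | P i) r i).
Proof.
move=> cop; apply: (big_ind (coprimep p)); first exact: coprimep1.
  by move=> q1 q2 cop1 cop2; rewrite coprimepMr cop1.
exact: cop.
Qed.

Lemma prod_coprimep_dvdp (I : finType) (r : I -> {poly K}) g :
  (forall i j, i != j -> coprimep (r i) (r j)) ->
  (forall i, r i %| g) -> \prod_i r i %| g.
Proof.
move=> cop dvd_g; suff: forall s, uniq s -> \prod_(i <- s) r i %| g.
  by apply; exact: index_enum_uniq.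
elim=> [|i s IHs] /=; first by rewrite big_nil dvd1p.
case/andP=> i_notin_s uniq_s; rewrite big_cons Gauss_dvdp ?dvd_g ?IHs //.
rewrite big_seq; apply: coprimep_prodr => j j_in_s; apply: cop.
by apply: contraNneq i_notin_s => ->.
Qed.

Lemma dvdp_cofactor (I : finType) (r : I -> {poly K}) i j :
  i != j -> r i %| \prod_(k | k != j) r k.
Proof. by move=> neq_ij; rewrite (bigD1 i) //= dvdp_mulIl. Qed.

Lemma coprimep_idempotents (I : finType) (r : I -> {poly K}) :
  (forall i j, i != j -> coprimep (r i) (r j)) ->
  exists e : I -> {poly K},
    [/\ forall i, \prod_(j | j != i) r j %| e i,
        forall i, r i %| 1 - e i
      & \prod_i r i %| 1 - \sum_i e i].
Proof.
move=> cop.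
have cop_cofactor i : coprimep (r i) (\prod_(j | j != i) r j).
  by apply: coprimep_prodr => j; rewrite eq_sym => /cop.
have ex_e i : exists ei, (\prod_(j | j != i) r j %| ei) && (r i %| 1 - ei).
  have /Bezout_eq1_coprimepP [[a b] /= ab1] := cop_cofactor i.
  set q := \prod_(j | j != i) r j in ab1 *; exists (b * q).
  by rewrite dvdp_mull ?dvdpp //= -ab1 addrK dvdp_mull ?dvdpp.
have [e eP] := fin_all_exists ex_e.
exists e; split => [i|i|]; try by case/andP: (eP i).
apply: (prod_coprimep_dvdp cop) => i.
rewrite (bigD1 i) //= opprD addrA; apply: dvdp_add; first by case/andP: (eP i).
rewrite dvdpNr; apply: (big_ind (dvdp (r i))) => [|q1 q2|j neq_ji].
- exact: dvdp0.
- exact: dvdp_add.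
case/andP: (eP j) => /(dvdp_trans _) -> //.
by apply: dvdp_cofactor; rewrite eq_sym.
Qed.
End Coprime.

Section Rising.
Variable R : comNzRingType.

Definition rising j : {poly R} := \prod_(k < j) ('X + k%:R).

Lemma rising0 : rising 0 = 1.
Proof. by rewrite /rising big_ord0. Qed.

Lemma rising_mulX j : rising j * 'X = rising j.+1 - j%:R *: rising j.
Proof. by rewrite /rising big_ord_recr /= mulrDr scaler_nat mulr_natr addrK. Qed.

Lemma rising_shift j : rising j.+1 \Po ('X - 1) = rising j.+1 - j.+1%:R *: rising j.
Proof.
have -> : rising j.+1 \Po ('X - 1) = rising j * ('X - 1).
  rewrite /rising rmorph_prod big_ord_recl /= addr0 comp_polyX mulrC; congr (_ * _).
  apply: eq_bigr => k _; rewrite comp_polyD comp_polyX -polyC_natr comp_polyC polyC_natr.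
  by rewrite -addrA /bump /= add1n -natr1 [-1 + _]addrC addrK.
by rewrite mulrBr rising_mulX mulr1 -natr1 scalerDl scale1r opprD addrA.
Qed.
End Rising.
Arguments rising {R} j.

Section PolynomialAction.
Variable V : lmodType algC.
Implicit Types (T S : V -> V) (p q : {poly algC}) (a b v : V).

(* Omega and the maps [pact T q] are plain functions, so their linearity is
   tracked by the predicate [linear]; packing it lets the lemmas on
   [{linear V -> V}] apply. *)
Definition linear_of T (linT : linear T) : {linear V -> V} :=
  HB.pack T (GRing.isLinear.Build algC V V *:%R T linT).

Section LinearFun.
Variables (T : V -> V) (linT : linear T).

Lemma lin0 : T 0 = 0. Proof. exact: linear0 (linear_of linT). Qed.
Lemma linD a b : T (a + b) = T a + T b. Proof. exact: raddfD (linear_of linT) a b. Qed.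
Lemma linZ c a : T (c *: a) = c *: T a. Proof. exact: linearZZ (linear_of linT) c a. Qed.
Lemma lin_sum (I : Type) (r : seq I) (P : pred I) (G : I -> V) :
  T (\sum_(i <- r | P i) G i) = \sum_(i <- r | P i) T (G i).
Proof. exact: (raddf_sum (linear_of linT) r P G). Qed.
End LinearFun.

Lemma iter_linear T n : linear T -> linear (iter n T).
Proof. by move=> linT c a b; elim: n => //= n ->; rewrite linD ?linZ. Qed.

Lemma pact_widen T p v n :
  (size p <= n)%N -> pact T p v = \sum_(i < n) p`_i *: iter i T v.
Proof.
move=> le_p_n; rewrite /pact (big_ord_widen n (fun i => p`_i *: iter i T v) le_p_n).
rewrite big_mkcond; apply: eq_bigr => i _; case: ltnP => // /(nth_default 0) ->.
by rewrite scale0r.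
Qed.

Lemma pact0 T v : pact T 0 v = 0.
Proof. by rewrite /pact size_poly0 big_ord0. Qed.

Lemma pactD T p q v : pact T (p + q) v = pact T p v + pact T q v.
Proof.
rewrite !(@pact_widen T _ v (maxn (size p) (size q))) ?leq_maxl ?leq_maxr ?size_polyD //.
by rewrite -big_split; apply: eq_bigr => i _; rewrite coefD scalerDl.
Qed.

Lemma pactZ T c p v : pact T (c *: p) v = c *: pact T p v.
Proof.
rewrite !(@pact_widen T _ v (size p)) ?size_scale_leq // scaler_sumr.
by apply: eq_bigr => i _; rewrite coefZ scalerA.
Qed.

Lemma pactN T p v : pact T (- p) v = - pact T p v.
Proof. by rewrite -[- p]scaleN1r pactZ scaleN1r. Qed.

Lemma pactB T p q v : pact T (p - q) v = pact T p v - pact T q v.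
Proof. by rewrite pactD pactN. Qed.

Lemma pact_sum T (I : Type) (r : seq I) (P : pred I) (G : I -> {poly algC}) v :
  pact T (\sum_(i <- r | P i) G i) v = \sum_(i <- r | P i) pact T (G i) v.
Proof. exact: (big_morph (pact T ^~ v) (fun p q => pactD T p q v) (pact0 T v)). Qed.

Lemma pactC T c v : pact T c%:P v = c *: v.
Proof. by rewrite (@pact_widen T _ v 1) ?size_polyC ?leq_b1 // big_ord1 coefC. Qed.

Lemma pact1 T v : pact T 1 v = v.
Proof. by rewrite pactC scale1r. Qed.

Lemma pact_mulX T p v : pact T (p * 'X) v = pact T p (T v).
Proof.
have [->|p_neq0] := eqVneq p 0; first by rewrite mul0r !pact0.
rewrite /pact size_mulX // big_ord_recl coefMX /= scale0r add0r.
by apply: eq_bigr => i _; rewrite coefMX /= -iterSr.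
Qed.

Lemma pactX T v : pact T 'X v = T v.
Proof. by rewrite -['X]mul1r pact_mulX pact1. Qed.

Lemma pact_ext T T' p v : T =1 T' -> pact T p v = pact T' p v.
Proof.
move=> eqT; apply: eq_bigr => i _; congr (_ *: _).
by elim: (nat_of_ord i) => //= n ->.
Qed.

Lemma pact_linear T p : linear T -> linear (pact T p).
Proof.
move=> linT c a b; rewrite /pact scaler_sumr -big_split; apply: eq_bigr => i _.
by rewrite iter_linear // scalerDr !scalerA mulrC.
Qed.

Lemma pact_comm T T' S p v : linear S -> (forall a, S (T a) = T' (S a)) ->
  S (pact T p v) = pact T' p (S v).
Proof.
move=> linS ST; rewrite lin_sum //; apply: eq_bigr => i _; rewrite linZ //.
by congr (_ *: _); elim: (nat_of_ord i) => //= n <-.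
Qed.

Lemma pactM T p q v : linear T -> pact T (p * q) v = pact T p (pact T q v).
Proof.
move=> linT; elim/poly_ind: p v => [|p c IHp] v; first by rewrite mul0r !pact0.
rewrite mulrDl !pactD mul_polyC pactZ mulrAC !pact_mulX IHp pactC.
by rewrite (@pact_comm T T T).
Qed.

Lemma pact_comp_shift T c p v : linear T ->
  pact T (p \Po ('X + c%:P)) v = pact (fun a => T a + c *: a) p v.
Proof.
move=> linT; rewrite comp_polyE pact_sum; apply: eq_bigr => i _; rewrite pactZ.
congr (_ *: _); elim: (nat_of_ord i) => [|n IHn] /=; first by rewrite expr0 pact1.
by rewrite exprS pactM // IHn pactD pactX pactC.
Qed.

Lemma pact_comp_add1 T p v : linear T ->
  pact T (p \Po ('X + 1)) v = pact (fun a => T a + a) p v.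
Proof.
move=> linT; rewrite -polyC1 pact_comp_shift //.
by apply: pact_ext => a; rewrite scale1r.
Qed.

Lemma pact_comp_sub1 T p v : linear T ->
  pact T (p \Po ('X - 1)) v = pact (fun a => T a - a) p v.
Proof.
move=> linT; rewrite -polyC1 -polyCN pact_comp_shift //.
by apply: pact_ext => a; rewrite scaleN1r.
Qed.

Lemma pact_dvdp_eq0 T p g : linear T ->
  (forall v, pact T p v = 0) -> p %| g -> forall v, pact T g v = 0.
Proof. by move=> linT p0 /dvdpP [k ->] v; rewrite pactM // p0 (lin0 (pact_linear k linT)). Qed.
End PolynomialAction.

Section Submodules.
Variables (V : lmodType algC) (E F H : {linear V -> V}).
Implicit Types (S A B : V -> Prop) (T : V -> V) (a b v x y : V).
Local Notation gen := (gen E F H).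
Local Notation submodule := (submodule E F H).

Definition module_endomorphism T :=
  [/\ linear T, forall v, E (T v) = T (E v), forall v, F (T v) = T (F v)
    & forall v, H (T v) = T (H v)].

Lemma gen_submodule x : submodule (gen x).
Proof.
split; [|exact: gen_add|exact: gen_scale|split; [exact: gen_E|exact: gen_F|exact: gen_H]].
by rewrite -(scale0r x); apply/gen_scale/gen_base.
Qed.

Lemma gen_min S x a : submodule S -> S x -> gen x a -> S a.
Proof. by case=> _ Sadd Sscale [SE SF SH] Sx; elim=> // *; auto. Qed.

Lemma submoduleB S a b : submodule S -> S a -> S b -> S (a - b).
Proof. by case=> _ Sadd Sscale _ Sa Sb; rewrite -scaleN1r; auto. Qed.

Lemma submodule_sum S (I : Type) (r : seq I) (P : pred I) (G : I -> V) :
  submodule S -> (forall i, P i -> S (G i)) -> S (\sum_(i <- r | P i) G i).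
Proof. by case=> S0 Sadd _ _ SG; apply: big_ind. Qed.

Lemma submodule_pact S T p a :
  submodule S -> (forall b, S b -> S (T b)) -> S a -> S (pact T p a).
Proof.
move=> subS ST Sa; apply: submodule_sum => // i _; case: subS => _ _ Sscale _.
by apply: Sscale; elim: (nat_of_ord i) => //= n; apply: ST.
Qed.

Lemma gen_map T x a : module_endomorphism T -> gen x a -> gen (T x) (T a).
Proof.
case=> linT TE TF TH; elim=> [|a1 a2 _ IH1 _ IH2|c a1 _ IH|a1 _ IH|a1 _ IH|a1 _ IH].
- exact: gen_base.
- by rewrite linD //; apply: gen_add.
- by rewrite linZ //; apply: gen_scale.
- by rewrite -TE; apply: gen_E.
- by rewrite -TF; apply: gen_F.
- by rewrite -TH; apply: gen_H.
Qed.

Lemma gen0 a : gen 0 a -> a = 0.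
Proof.
apply: (@gen_min (eq^~ 0)) => //; split=> //.
- by move=> ? ? -> ->; rewrite addr0.
- by move=> ? ? ->; rewrite scaler0.
- by split=> ? ->; rewrite linear0.
Qed.

Lemma gen_annihilated T x a : module_endomorphism T -> T x = 0 -> gen x a -> T a = 0.
Proof. by move=> endoT Tx0 /(gen_map endoT); rewrite Tx0 => /gen0. Qed.

Lemma whittaker_component (eta : algC) A B x a b :
  submodule A -> submodule B -> (forall y, A y -> B y -> y = 0) ->
  A a -> B b -> x = a + b -> E x = eta *: x -> E a = eta *: a.
Proof.
move=> subA subB disjAB Aa Bb xab Ex.
have [_ _ Ascale [AE _ _]] := subA; have [_ _ Bscale [BE _ _]] := subB.
apply/subr0_eq/disjAB; first exact: submoduleB (AE _ Aa) (Ascale _ _ Aa).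
have -> : E a - eta *: a = eta *: b - E b.
  have EaEb : E a + E b = eta *: a + eta *: b by rewrite -linearD -scalerDr -xab.
  by rewrite -[E a](addrK (E b)) EaEb addrAC [_ + eta *: b]addrC addrK.
exact: submoduleB (Bscale _ _ Bb) (BE _ Bb).
Qed.

Lemma gen_complement_zero A B x : submodule B -> B x ->
  (forall a, A a -> gen x a) -> (forall y, A y -> B y -> y = 0) -> zero_set A.
Proof. by move=> subB Bx Agen disjAB y Ay; apply: disjAB (gen_min subB Bx (Agen y Ay)). Qed.
End Submodules.

Section CentralOperator.
Variables (V : lmodType algC) (E F H : {linear V -> V}) (T : V -> V).
Hypothesis endoT : module_endomorphism E F H T.
(* Holds for Omega, which is built from E, F and H. *)
Hypothesis submodule_T : forall S a, submodule E F H S -> S a -> S (T a).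
Local Notation gen := (gen E F H).
Implicit Types (p q r g : {poly algC}) (a v w x : V).

Let linT : linear T. Proof. by case: endoT. Qed.

Lemma pact_endomorphism p : module_endomorphism E F H (pact T p).
Proof.
case: endoT => _ TE TF TH; split; first exact: pact_linear.
all: by move=> v; apply: pact_comm => //; exact: linearP.
Qed.

Lemma submodule_pact_central S p a : submodule E F H S -> S a -> S (pact T p a).
Proof. by move=> subS Sa; apply: (submodule_pact p subS _ Sa) => b; apply: submodule_T. Qed.

Lemma gen_pact p x a : gen x a -> gen (pact T p x) (pact T p a).
Proof. exact/gen_map/pact_endomorphism. Qed.

Lemma gen_cofactor_annihilated r q g w a :
  (forall v, pact T (r * q) v = 0) -> r %| g -> gen (pact T q w) a -> pact T g a = 0.
Proof.
move=> rq0 /dvdpP [k ->] qw_a; rewrite pactM //.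
have -> : pact T r a = 0.
  by apply: gen_annihilated (pact_endomorphism r) _ qw_a; rewrite -pactM.
exact: lin0 (pact_linear k linT).
Qed.

Lemma cofactor_annihilator r q w : (forall v, gen w v) -> q != 0 ->
  (forall g, (forall v, pact T g v = 0) <-> r * q %| g) ->
  forall g, pact T g (pact T q w) = 0 <-> r %| g.
Proof.
move=> cyc q_neq0 ann g; split=> [gqw0|r_dvd_g]; last first.
  by apply: gen_cofactor_annihilated r_dvd_g (gen_base _ _ _ _); apply/ann.
rewrite -(dvdp_mul2r _ _ q_neq0); apply/ann => v.
by apply: gen_annihilated (pact_endomorphism _) _ (cyc v); rewrite pactM.
Qed.

Lemma cofactor_direct_sum_decomp w m (r : 'I_m -> {poly algC}) :
  (forall v, gen w v) -> (forall i j, i != j -> coprimep (r i) (r j)) ->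
  (forall v, pact T (\prod_i r i) v = 0) ->
  direct_sum_decomp (fun i => gen (pact T (\prod_(j | j != i) r j) w)).
Proof.
move=> cyc cop ann; have [e [cofactor_e r_dvd_1e prod_dvd_1e]] := coprimep_idempotents cop.
have ann_cofactor i g a : r i %| g -> gen (pact T (\prod_(j | j != i) r j) w) a ->
    pact T g a = 0.
  by apply: gen_cofactor_annihilated => v; have := ann v; rewrite (bigD1 i).
split=> [v|vs Vvs sum_vs0 i].
  exists (fun i => pact T (e i) v); split=> [i|].
    by have /dvdpP [k ->] := cofactor_e i; rewrite mulrC pactM //; apply/gen_pact/cyc.
  have := pact_dvdp_eq0 linT ann prod_dvd_1e v.
  by rewrite pactB pact1 pact_sum => /subr0_eq.
have <- : pact T (e i) (\sum_j vs j) = vs i.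
  rewrite (lin_sum (pact_linear _ linT)) (bigD1 i) //= big1 ?addr0 => [|j neq_ji].
    by have := ann_cofactor _ _ _ (r_dvd_1e i) (Vvs i); rewrite pactB pact1 => /subr0_eq.
  apply: ann_cofactor (Vvs j); apply: dvdp_trans (cofactor_e i).
  exact: dvdp_cofactor.
by rewrite sum_vs0 (lin0 (pact_linear _ linT)).
Qed.

Lemma whittaker_gen_indecomposable (eta : algC) x p n :
  E x = eta *: x ->
  (forall y, gen x y -> E y = eta *: y -> exists c, y = pact T c x) ->
  irreducible_poly p -> (0 < n)%N ->
  (forall g, pact T g x = 0 <-> p ^+ n %| g) ->
  indecomposable E F H (gen x).
Proof.
move=> Ex whittaker irr_p n_gt0 ann; split; first exact: gen_submodule.
  move=> zero_x; have : p ^+ n %| 1 by apply/ann; rewrite pact1; apply/zero_x/gen_base.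
  move/(dvdp_trans (dvdp_exp n_gt0 (dvdpp p))).
  by rewrite dvdp1 (negbTE (size_irredp_neq1 irr_p)).
move=> A B subA subB A_x B_x split_x disjAB.
have [a [b [Aa Bb xab]]] := split_x x (gen_base _ _ _ _).
have [c ac] := whittaker a (A_x a Aa) (whittaker_component subA subB disjAB Aa Bb xab Ex).
have bc : b = pact T (1 - c) x by rewrite pactB pact1 -ac xab addrC addKr.
have : p ^+ n %| c * (1 - c).
  apply/ann/disjAB.
    by rewrite mulrC pactM // -ac; apply: submodule_pact_central.
  by rewrite pactM // -bc; apply: submodule_pact_central.
case/(irredp_exp_dvdp_idem irr_p) => /ann ca0.
  left; apply: gen_complement_zero subB _ A_x disjAB.
  by rewrite xab ac ca0 add0r.
right; apply: gen_complement_zero subA _ B_x (fun y By Ay => disjAB y Ay By).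
by rewrite xab bc ca0 addr0.
Qed.
End CentralOperator.

Section Casimir.
Variables (V : lmodType algC) (f u : {poly algC}) (E F H : {linear V -> V}).
Hypothesis hfu : f = 2%:R^-1 *: (u \Po ('X + 1) - u).
Hypothesis hrel : Rf_relations f E F H.
Local Notation Om := (Omega u E F H).
Implicit Types (p q : {poly algC}) (S : V -> Prop) (a v y z : V).

Let pactH_linear p : linear (pact H p) := pact_linear p (linearP H).

Lemma EF_rel v : E (F v) = F (E v) + pact H f v.
Proof. by case: (hrel v) => <- _ _; rewrite addrC subrK. Qed.

Lemma EH_rel v : E (H v) = H (E v) - E v.
Proof. by case: (hrel v) => _ HE _; rewrite -{2}HE opprB addrC subrK. Qed.

Lemma FH_rel v : F (H v) = H (F v) + F v.
Proof. by case: (hrel v) => _ _ HF; rewrite -{2}[F v]opprK -HF opprB addrC subrK. Qed.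

Lemma HF_rel v : H (F v) = F (H v) - F v.
Proof. by rewrite FH_rel addrK. Qed.

Lemma E_pactH p v : E (pact H p v) = pact H (p \Po ('X - 1)) (E v).
Proof.
rewrite (pact_comp_sub1 _ _ (linearP H)).
by apply: pact_comm (linearP E) _ => a; rewrite EH_rel.
Qed.

Lemma F_pactH p v : F (pact H p v) = pact H (p \Po ('X + 1)) (F v).
Proof.
rewrite (pact_comp_add1 _ _ (linearP H)).
by apply: pact_comm (linearP F) _ => a; rewrite FH_rel.
Qed.

Lemma H_pactH p v : H (pact H p v) = pact H p (H v).
Proof. exact: pact_comm (linearP H) _. Qed.

Lemma Omega_pactH v : Om v = 2%:R *: F (E v) + pact H (u \Po ('X + 1)) v.
Proof. by rewrite (pact_comp_add1 _ _ (linearP H)). Qed.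

Lemma u_shift : 2%:R *: f + u = u \Po ('X + 1).
Proof. by rewrite hfu scalerA mulfV ?pnatr_eq0 // scale1r subrK. Qed.

Lemma Omega_linear : linear Om.
Proof.
move=> c a b; rewrite !Omega_pactH (linearP E) (linearP F) (pactH_linear _).
by rewrite !scalerDr addrACA !scalerA [2%:R * c]mulrC.
Qed.

Lemma Omega_E v : E (Om v) = Om (E v).
Proof.
rewrite !Omega_pactH linearD linearZZ EF_rel E_pactH -comp_polyA.
rewrite comp_polyD comp_polyX comp_polyC addrNK comp_polyXr -u_shift pactD pactZ.
by rewrite scalerDr addrA.
Qed.

Lemma Omega_F v : F (Om v) = Om (F v).
Proof.
rewrite !Omega_pactH !linearD !linearZZ EF_rel linearD !F_pactH -{1}u_shift.
by rewrite comp_polyD comp_polyZ pactD pactZ scalerDr addrA.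
Qed.

Lemma Omega_H v : H (Om v) = Om (H v).
Proof.
rewrite !Omega_pactH linearD linearZZ H_pactH.
by rewrite HF_rel -linearB EH_rel.
Qed.

Lemma Omega_endomorphism : module_endomorphism E F H Om.
Proof. by split; [exact: Omega_linear | exact: Omega_E | exact: Omega_F | exact: Omega_H]. Qed.

Lemma submodule_Omega S a : submodule E F H S -> S a -> S (Om a).
Proof.
move=> subS Sa; have [_ Sadd Sscale [SE SF SH]] := subS.
rewrite Omega_pactH; apply: Sadd; first by apply/Sscale/SF/SE.
exact: (submodule_pact _ subS SH).
Qed.

Section WhittakerVectors.
Variable eta : algC.
Hypothesis eta_neq0 : eta != 0.

Lemma whittakerZ c z : E z = eta *: z -> E (c *: z) = eta *: (c *: z).
Proof. by move=> Ez; rewrite linearZZ Ez !scalerA mulrC. Qed.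

Lemma lower_rising j z : E z = eta *: z ->
  E (pact H (rising j.+1) z) - eta *: pact H (rising j.+1) z =
  pact H (rising j) (- (eta * j.+1%:R) *: z).
Proof.
move=> Ez; rewrite E_pactH Ez !(linZ (pactH_linear _)) rising_shift pactB pactZ.
by rewrite scalerBr addrAC subrr add0r scalerA scaleNr.
Qed.

Lemma lower_rising_sum d (z : nat -> V) : (forall j, E (z j) = eta *: z j) ->
  E (\sum_(j < d.+1) pact H (rising j) (z j)) - eta *: \sum_(j < d.+1) pact H (rising j) (z j)
  = \sum_(j < d) pact H (rising j) (- (eta * j.+1%:R) *: z j.+1).
Proof.
move=> Ez; rewrite linear_sum scaler_sumr -sumrB big_ord_recl rising0 pact1 Ez subrr add0r.
by apply: eq_bigr => j _; rewrite lower_rising.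
Qed.

Lemma lower_scale_eq0 j z : - (eta * j.+1%:R) *: z = 0 -> z = 0.
Proof.
by move/eqP; rewrite scaler_eq0 oppr_eq0 mulf_eq0 (negbTE eta_neq0) pnatr_eq0 => /eqP.
Qed.

Lemma rising_sum_eq0 d (z : nat -> V) : (forall j, E (z j) = eta *: z j) ->
  \sum_(j < d) pact H (rising j) (z j) = 0 -> forall j, (j < d)%N -> z j = 0.
Proof.
elim: d z => [|d IHd] z Ez sum0 j lt_jd //.
have := lower_rising_sum d Ez; rewrite sum0 linear0 scaler0 subrr => /esym lowered.
have zS k : (k < d)%N -> z k.+1 = 0.
  move=> lt_kd; apply: (@lower_scale_eq0 k).
  by apply: (IHd (fun i => - (eta * i.+1%:R) *: z i.+1) _ lowered) => // i; apply: whittakerZ.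
case: j lt_jd => [_|j /zS] //; move: sum0; rewrite big_ord_recl rising0 pact1 big1 ?addr0 //.
by move=> k _; rewrite zS // (lin0 (pactH_linear _)).
Qed.

Lemma whittaker_rising_sum d (z : nat -> V) y : (forall j, E (z j) = eta *: z j) ->
  y = \sum_(j < d.+1) pact H (rising j) (z j) -> E y = eta *: y -> y = z 0%N.
Proof.
move=> Ez -> /eqP; rewrite -subr_eq0 lower_rising_sum // => /eqP lowered.
have zS k : (k < d)%N -> z k.+1 = 0.
  move=> lt_kd; apply: (@lower_scale_eq0 k).
  by apply: (rising_sum_eq0 (z := fun i => - (eta * i.+1%:R) *: z i.+1) _ lowered) => // i;
    apply: whittakerZ.
rewrite big_ord_recl rising0 pact1 big1 ?addr0 // => k _.
by rewrite zS // (lin0 (pactH_linear _)).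
Qed.

Section CyclicWhittakerModule.
Variable x : V.
Hypothesis Ex : E x = eta *: x.

Definition rising_span y := exists d (c : nat -> {poly algC}),
  y = \sum_(j < d) pact H (rising j) (pact Om (c j) x).

Lemma whittaker_pact_Omega c : E (pact Om c x) = eta *: pact Om c x.
Proof.
by rewrite (pact_comm c x (linearP E) Omega_E) Ex (linZ (pact_linear _ Omega_linear)).
Qed.

Lemma rising_span_pad d d' (c : nat -> {poly algC}) : (d <= d')%N ->
  \sum_(j < d) pact H (rising j) (pact Om (c j) x) =
  \sum_(j < d') pact H (rising j) (pact Om (if (j < d)%N then c j else 0) x).
Proof.
move=> le_dd'; rewrite (big_ord_widen d' (fun j => pact H (rising j) (pact Om (c j) x)) le_dd').
rewrite big_mkcond; apply: eq_bigr => j _.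
by case: ifP; rewrite // pact0 (lin0 (pactH_linear _)).
Qed.

Lemma rising_spanD y1 y2 : rising_span y1 -> rising_span y2 -> rising_span (y1 + y2).
Proof.
move=> [d1 [c1 ->]] [d2 [c2 ->]]; exists (maxn d1 d2).
exists (fun j => (if (j < d1)%N then c1 j else 0) + (if (j < d2)%N then c2 j else 0)).
rewrite (rising_span_pad c1 (leq_maxl d1 d2)) (rising_span_pad c2 (leq_maxr d1 d2)).
by rewrite -big_split; apply: eq_bigr => j _; rewrite pactD (linD (pactH_linear _)).
Qed.

Lemma rising_spanZ k y : rising_span y -> rising_span (k *: y).
Proof.
move=> [d [c ->]]; exists d, (fun j => k *: c j); rewrite scaler_sumr.
by apply: eq_bigr => j _; rewrite pactZ (linZ (pactH_linear _)).
Qed.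

Lemma rising_spanB y1 y2 : rising_span y1 -> rising_span y2 -> rising_span (y1 - y2).
Proof. by move=> span1 span2; rewrite -scaleN1r; apply/rising_spanD/rising_spanZ. Qed.

Lemma rising_span_sum (I : Type) (r : seq I) (P : pred I) (G : I -> V) :
  (forall i, P i -> rising_span (G i)) -> rising_span (\sum_(i <- r | P i) G i).
Proof.
move=> spanG; apply: big_ind => //; last exact: rising_spanD.
by exists 0%N, (fun=> 0); rewrite big_ord0.
Qed.

Lemma rising_span_term c j : rising_span (pact H (rising j) (pact Om c x)).
Proof.
exists j.+1, (fun i => if i == j then c else 0).
rewrite big_ord_recr /= eqxx big1 ?add0r // => i _.
by rewrite (ltn_eqF (ltn_ord i)) pact0 (lin0 (pactH_linear _)).
Qed.

Lemma rising_span_base c : rising_span (pact Om c x).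
Proof. by have := rising_span_term c 0; rewrite rising0 pact1. Qed.

Lemma rising_span_map T : linear T ->
  (forall c j, rising_span (T (pact H (rising j) (pact Om c x)))) ->
  forall y, rising_span y -> rising_span (T y).
Proof. by move=> linT span_T y [d [c ->]]; rewrite lin_sum //; apply: rising_span_sum. Qed.

Lemma rising_spanH y : rising_span y -> rising_span (H y).
Proof.
apply: rising_span_map => [|c j]; first exact: linearP.
rewrite H_pactH -pact_mulX rising_mulX pactB pactZ.
by apply: rising_spanB; [|apply: rising_spanZ]; apply: rising_span_term.
Qed.

Lemma rising_span_pactH p y : rising_span y -> rising_span (pact H p y).
Proof.
move=> span_y; apply: rising_span_sum => i _; apply: rising_spanZ.
by elim: (nat_of_ord i) => //= n; apply: rising_spanH.
Qed.

Lemma rising_spanE y : rising_span y -> rising_span (E y).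
Proof.
apply: rising_span_map => [|c [|j]]; first exact: linearP.
  by rewrite rising0 pact1 whittaker_pact_Omega; apply/rising_spanZ/rising_span_base.
rewrite -[E _](subrK (eta *: pact H (rising j.+1) (pact Om c x))).
rewrite lower_rising ?whittaker_pact_Omega // -pactZ.
by apply: rising_spanD; [|apply: rising_spanZ]; apply: rising_span_term.
Qed.

Lemma F_pact_Omega c : F (pact Om c x) =
  (2%:R * eta)^-1 *: (pact Om ('X * c) x - pact H (u \Po ('X + 1)) (pact Om c x)).
Proof.
rewrite (pactM _ _ _ Omega_linear) pactX Omega_pactH whittaker_pact_Omega addrK.
by rewrite [F (eta *: _)]linearZZ !scalerA mulVf ?scale1r // mulf_neq0 ?pnatr_eq0.
Qed.

Lemma rising_spanF y : rising_span y -> rising_span (F y).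
Proof.
apply: rising_span_map => [|c j]; first exact: linearP.
rewrite F_pactH F_pact_Omega; apply/rising_span_pactH/rising_spanZ/rising_spanB.
  exact: rising_span_base.
exact/rising_span_pactH/rising_span_base.
Qed.

Lemma gen_rising_span y : gen E F H x y -> rising_span y.
Proof.
elim=> [|? ? _ ? _|c ? _|? _|? _|? _].
- by have := rising_span_base 1; rewrite pact1.
- exact: rising_spanD.
- exact: rising_spanZ.
- exact: rising_spanE.
- exact: rising_spanF.
- exact: rising_spanH.
Qed.

Lemma whittaker_gen_Omega y :
  gen E F H x y -> E y = eta *: y -> exists c, y = pact Om c x.
Proof.
move=> /gen_rising_span [[|d] [c ->]] Ey.
  by exists 0; rewrite big_ord0 pact0.
exists (c 0%N); exact: whittaker_rising_sum (fun j => whittaker_pact_Omega (c j)) erefl Ey.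
Qed.
End CyclicWhittakerModule.
End WhittakerVectors.
End Casimir.

Theorem mainTheorem10
  (f u : {poly algC})
  (hfu : f = 2%:R^-1 *: (u \Po ('X + 1) - u))
  (V : lmodType algC) (E F H : {linear V -> V})
  (hrel : Rf_relations f E F H)
  (eta : algC) (heta : eta != 0)
  (w : V) (hw : E w = eta *: w) (hcyc : forall v : V, gen E F H w v)
  (m : nat) (ps : 'I_m -> {poly algC}) (ns : 'I_m -> nat)
  (hirr : forall i, irreducible_poly (ps i))
  (hnassoc : forall i j, i != j -> ~~ (ps i %= ps j))
  (hns : forall i, (0 < ns i)%N)
  (hZV : forall q : {poly algC},
      (forall v : V, pact (Omega u E F H) q v = 0) <->
      (\prod_(i < m) ps i ^+ ns i) %| q) :
  let Vi := fun i : 'I_m =>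
    gen E F H (pact (Omega u E F H) (\prod_(j < m | j != i) ps j ^+ ns j) w) in
  (forall i, indecomposable E F H (Vi i)) /\ direct_sum_decomp Vi.
Proof.
move=> Vi; have endoO := Omega_endomorphism hfu hrel.
have cop i j : i != j -> coprimep (ps i ^+ ns i) (ps j ^+ ns j).
  by move=> neq_ij; apply/coprimep_expl/coprimep_expr/irredp_coprimep/hnassoc.
split=> [i|]; last first.
  by apply: cofactor_direct_sum_decomp endoO _ _ _ hcyc cop _; apply/hZV.
have whittaker_x := whittaker_pact_Omega hfu hrel hw (\prod_(j | j != i) ps j ^+ ns j).
apply: (whittaker_gen_indecomposable endoO (@submodule_Omega _ u E F H) whittaker_x _
  (hirr i) (hns i)).
  by move=> y; apply: (whittaker_gen_Omega hfu hrel heta whittaker_x (y := y)).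
apply: cofactor_annihilator endoO _ _ _ hcyc _ _.
  by apply/prodf_neq0 => j _; rewrite expf_neq0 ?irredp_neq0.
by move=> g; have := hZV g; rewrite (bigD1 i) //=.
Qed.
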